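(* Let $K$ be a complete $3$-partite $3$-graph on $k\ge3$ vertices. For every $\epsilon,\beta,\mu'>0$ and all positive integers $i_0,r$, there exist $\beta'>0$, a positive integer $i_0'$ and $n_0$ such that the following holds for every $n\ge n_0$. Let $H$ be an $n$-vertex $3$-graph with a partition $\mathcal P=\{V_0,V_1,\dots,V_r\}$ of $V(H)$ such that for each $j\in[r]$, $|V_j|\ge\epsilon^2 n/2$ and $V_j$ is $(\beta,i_0)$-closed in $H$. If $\mathbf u_j-\mathbf u_l\in L^{\mu'}_{\mathcal P,K}(H)$ for all $1\le j<l\le r$, then $V(H)\setminus V_0$ is $(\beta',i_0')$-closed in $H$.
   Context: A complete $3$-partite $3$-graph has its vertex set split into three nonempty parts, with edges exactly the triples meeting each part once. A $K$-factor of a $3$-graph is a collection of vertex-disjoint copies of $K$ covering all its vertices. For an $n$-vertex $3$-graph $H$, $\beta>0$, $i\in\mathbb N$, two vertices $u,v$ are $(\beta,i)$-reachable in $H$ if there are at least $\beta n^{ik-1}$ sets $W\subseteq V(H)$ of size $ik-1$ such that both $H[\{u\}\cup W]$ and $H[\{v\}\cup W]$ contain $K$-factors; a set $A$ is $(\beta,i)$-closed in $H$ if every two vertices of $A$ are $(\beta,i)$-reachable in $H$. For a partition $\mathcal P=\{V_0,V_1,\dots,V_r\}$ of $V(H)$ and $S\subseteq V(H)$, the index vector $\mathbf i_{\mathcal P}(S)\in\mathbb Z^r$ has $j$-th coordinate $|S\cap V_j|$ for $j\in[r]$ ($V_0$ is ignored). A $k$-vector $\mathbf v\in\mathbb Z^r$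 (nonnegative coordinates summing to $k$) is a $\mu$-robust $K$-vector if at least $\mu|V(H)|^k$ copies $K'$ of $K$ in $H$ satisfy $\mathbf i_{\mathcal P}(V(K'))=\mathbf v$. $L^{\mu}_{\mathcal P,K}(H)$ is the lattice in $\mathbb Z^r$ consisting of all integer linear combinations of the $\mu$-robust $K$-vectors. $\mathbf u_j\in\mathbb Z^r$ is the $j$-th unit vector. *)

From HB Require Import structures.
From mathcomp Require Import all_boot all_order all_algebra.
From mathcomp Require Import reals.
Set Implicit Arguments. Unset Strict Implicit. Unset Printing Implicit Defensive.
Import Order.TTheory GRing.Theory Num.Theory.
Local Open Scope ring_scope.

Definition uniform3 (V : finType) (H : {set {set V}}) : Prop :=
  forall e, e \in H -> #|e| = 3%N.

Definition complete3partite (k : nat) (KE : {set {set 'I_k}}) : Prop :=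
  exists p : 'I_k -> 'I_3,
    (forall c : 'I_3, exists x, p x = c) /\
    KE = [set e : {set 'I_k} | (#|e| == 3%N) && ([set p x | x in e] == [set: 'I_3])].

Definition embedding (V : finType) (k : nat) (KE : {set {set 'I_k}})
  (H : {set {set V}}) (f : {ffun 'I_k -> V}) : bool :=
  injectiveb f && [forall e in KE, f @: e \in H].

Definition copies (V : finType) (k : nat) (KE : {set {set 'I_k}})
  (H : {set {set V}}) : {set {set {set V}}} :=
  [set F : {set {set V}} | [exists f : {ffun 'I_k -> V},
     embedding KE H f && (F == [set (f : 'I_k -> V) @: e | e : {set 'I_k} in KE])]].

(* H[S] contains a K-factor: S is partitioned into vertex sets of copies of K
   in H (each copy lies inside S, hence inside H[S]). *)
Definition has_Kfactor (V : finType) (k : nat) (KE : {set {set 'I_k}})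
  (H : {set {set V}}) (S : {set V}) : bool :=
  [exists P : {set {set V}}, partition P S &&
     [forall B in P, [exists f : {ffun 'I_k -> V},
        embedding KE H f && (f @: setT == B)]]].

Definition reachable (R : realType) (V : finType) (k : nat)
  (KE : {set {set 'I_k}}) (H : {set {set V}}) (beta : R) (i : nat) (u v : V) : Prop :=
  beta * (#|V|%:R) ^+ (i * k).-1 <=
  #|[set W : {set V} | (#|W| == (i * k).-1)%N
        && has_Kfactor KE H (u |: W) && has_Kfactor KE H (v |: W)]|%:R.

Definition closed_set (R : realType) (V : finType) (k : nat)
  (KE : {set {set 'I_k}}) (H : {set {set V}}) (beta : R) (i : nat) (A : {set V}) : Prop :=
  forall u v, u \in A -> v \in A -> reachable KE H beta i u v.

(* Partition P = {V_0, ..., V_r} given by a labelling pt : V -> 'I_r.+1;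
   V_0 = pt^-1(0) and, for j : 'I_r, part j is V_{j+1}. *)
Definition Vpart (V : finType) (r : nat) (pt : V -> 'I_r.+1) (j : 'I_r) : {set V} :=
  [set x | pt x == lift ord0 j].

Definition V0 (V : finType) (r : nat) (pt : V -> 'I_r.+1) : {set V} :=
  [set x | pt x == ord0].

Definition ivec (V : finType) (r : nat) (pt : V -> 'I_r.+1) (S : {set V}) : 'rV[int]_r :=
  \row_(j < r) (#|S :&: Vpart pt j|%:Z).

Definition kvector (r k : nat) (v : 'rV[int]_r) : Prop :=
  (forall j, 0 <= v ord0 j) /\ \sum_(j < r) v ord0 j = k%:Z.

Definition robust (R : realType) (V : finType) (k r : nat) (KE : {set {set 'I_k}})
  (H : {set {set V}}) (pt : V -> 'I_r.+1) (mu : R) (v : 'rV[int]_r) : Prop :=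
  kvector k v /\
  mu * (#|V|%:R) ^+ k <=
  #|[set F in copies KE H | ivec pt (\bigcup_(e in F) e) == v]|%:R.

Definition in_lattice (R : realType) (V : finType) (k r : nat) (KE : {set {set 'I_k}})
  (H : {set {set V}}) (pt : V -> 'I_r.+1) (mu : R) (v : 'rV[int]_r) : Prop :=
  exists cs : seq ('rV[int]_r * int),
    (forall p, p \in cs -> robust KE H pt mu p.1) /\
    v = \sum_(p <- cs) p.1 *~ p.2.

Definition unitv (r : nat) (j : 'I_r) : 'rV[int]_r := delta_mx ord0 j.

From HB Require Import structures.
From mathcomp Require Import all_boot all_order all_algebra.
From mathcomp Require Import boolp reals.
From mathcomp Require Import ring lra zify.
Set Implicit Arguments. Unset Strict Implicit. Unset Printing Implicit Defensive.
Import Order.TTheory GRing.Theory Num.Theory.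

(* Fix [u] in [V_j] and [v] in [V_l] and grow a set [W] such that [u + W] and
   [v + W] have K-factors except for leftover sets [D_u], [D_v] outside [V_0].
   Start from [D_u = {u}] and [D_v = {v}].  Adding a copy of [K] to [W] covers it
   on one side and adds its vertices to the leftover of the other side, so the
   difference of the index vectors of [D_u] and [D_v] moves by a robust K-vector.
   Writing [u_j - u_l] as [sum P - sum N] with robust [P], [N] of length [M], this
   difference is brought to [0]; then the leftovers pair up into vertices [x], [y]
   of a common part [V_i], and each pair is removed by adding to [W] a set
   witnessing that [x] and [y] are (beta, i0)-reachable.  Every step has
   Omega(n^b) choices avoiding the current set, which gives beta' n^(i0' k - 1)
   sets [W].  The length [M] is bounded in terms of [k] and [r] only, because the
   robust K-vectors of any [H] form one of finitely many sets of k-vectors. *)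

Lemma bin_leq_expn n s : 'C(n, s) <= n ^ s.
Proof.
apply: (@leq_trans ('C(n, s) * s`!)); first by rewrite leq_pmulr ?fact_gt0.
rewrite bin_ffact ffact_prod.
apply: (@leq_trans (\prod_(i < s) n)); first by apply: leq_prod => i _; rewrite leq_subr.
by rewrite prod_nat_const card_ord.
Qed.

Lemma leq_card_fibers (T U : finType) (f : T -> U) (A : {set T}) c :
  (forall y, #|[set x in A | f x == y]| <= c) -> #|A| <= #|f @: A| * c.
Proof.
move=> fibc; rewrite -sum1_card (partition_big_imset f) /= -sum_nat_const.
apply: leq_sum => y _; rewrite sum1_card.
by rewrite (eq_card (B := [set x in A | f x == y])) ?fibc // => x; rewrite !inE.
Qed.

Section Draws.
Variable V : finType.

Lemma card_draws_leq_expn s : #|[set W : {set V} | #|W| == s]| <= #|V| ^ s.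
Proof. by rewrite card_draws bin_leq_expn. Qed.

Lemma card_draws_mem (x : V) s :
  #|[set W : {set V} | (#|W| == s.+1) && (x \in W)]| <= #|V| ^ s.
Proof.
apply: leq_trans (card_draws_leq_expn s).
rewrite -(@card_in_imset _ _ (fun W => W :\ x)).
  apply: subset_leq_card; apply/subsetP => Z /imsetP[W].
  rewrite inE => /andP[/eqP cardW xW] ->; rewrite inE.
  by rewrite (cardsD1 x W) xW /= add1n in cardW; case: cardW => ->.
move=> W1 W2; rewrite !inE => /andP[_ xW1] /andP[_ xW2] eqW.
by rewrite -(setD1K xW1) -(setD1K xW2) eqW.
Qed.

Lemma card_draws_meeting (X : {set V}) s :
  #|[set W : {set V} | (#|W| == s.+1) && ~~ [disjoint W & X]]| <= #|X| * #|V| ^ s.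
Proof.
pose meets x := [set W : {set V} | (#|W| == s.+1) && (x \in W)].
apply: (@leq_trans #|\bigcup_(x in X) meets x|).
  apply: subset_leq_card; apply/subsetP => W; rewrite inE => /andP[cardW].
  case/pred0Pn => x /andP[xW xX]; apply/bigcupP; exists x => //.
  by rewrite /meets inE cardW; exact: xW.
apply: (@leq_trans (\sum_(x in X) #|V| ^ s)); last by rewrite sum_nat_const.
apply: (big_ind2 (fun (A : {set {set V}}) n => #|A| <= n)) => [|A B m n leA leB|x _].
- by rewrite cards0.
- exact: leq_trans (leq_card_setU _ _) (leq_add leA leB).
- exact: card_draws_mem.
Qed.

(* Each union arises from at most [2 ^ S] disjoint pairs, read off from its
   first component. *)
Lemma count_pairs_by_union (A : {set {set V}}) (B : {set V} -> {set {set V}})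
    (C : {set {set V}}) S :
  (forall x, x \in A -> forall y, y \in B x ->
     [/\ [disjoint x & y], x :|: y \in C & #|x :|: y| <= S]) ->
  \sum_(x in A) #|B x| <= #|C| * 2 ^ S.
Proof.
move=> hB.
pose P := [set p : {set V} * {set V} | (p.1 \in A) && (p.2 \in B p.1)].
have -> : \sum_(x in A) #|B x| = #|P|.
  rewrite -sum1_card (eq_bigr (fun x => \sum_(y in B x) 1)) => [|x _]; last first.
    by rewrite sum1_card.
  by rewrite pair_big_dep /=; apply: eq_bigl => p; rewrite inE.
apply: leq_trans (leq_card_fibers (f := fun p => p.1 :|: p.2) (c := 2 ^ S) _) _.
  move=> y; have [->|[p0]] := set_0Vmem [set p in P | p.1 :|: p.2 == y].
    by rewrite cards0.
  rewrite !inE => /andP[/andP[Ap0 Bp0] /eqP <-].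
  have [_ _ cardS] := hB _ Ap0 _ Bp0.
  apply: (@leq_trans (2 ^ #|p0.1 :|: p0.2|)); last by rewrite leq_pexp2l.
  rewrite -card_powerset -(@card_in_imset _ _ (fun p => p.1)).
    apply: subset_leq_card; apply/subsetP => z /imsetP[p]; rewrite !inE.
    by move=> /andP[_ /eqP <-] ->; rewrite subsetUl.
  have snd_of_union (a b : {set V}) : [disjoint a & b] -> (a :|: b) :\: a = b.
    by move=> dab; rewrite setDUl setDv set0U; apply/setDidPl; rewrite disjoint_sym.
  move=> [p1 p2] [q1 q2]; rewrite !inE /= => /andP[/andP[Ap Bp] /eqP ep].
  move=> /andP[/andP[Aq Bq] /eqP eq] e1; subst q1.
  have [dp _ _] := hB _ Ap _ Bp; have [dq _ _] := hB _ Aq _ Bq.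
  by rewrite -(snd_of_union _ _ dp) -(snd_of_union _ _ dq) ep eq.
apply: leq_mul => //; apply: subset_leq_card; apply/subsetP => z /imsetP[p].
by rewrite inE => /andP[Ap Bp] ->; have [_ ? _] := hB _ Ap _ Bp.
Qed.

End Draws.

Section WitnessBound.
Variables (I : finType) (P : I -> nat -> Prop).

Definition witness (i : I) : nat :=
  if pselect (exists m, P i m) is left h then projT1 (cid h) else 0%N.

Definition witness_bound : nat := \max_i witness i.

Lemma witness_boundP i : (exists m, P i m) -> exists2 m, (m <= witness_bound)%N & P i m.
Proof.
move=> hi; exists (witness i); first exact: leq_bigmax.
by rewrite /witness; case: pselect => // h; apply: projT2.
Qed.

Lemma witness_bound0 : (forall i, ~ exists m, P i m) -> witness_bound = 0%N.
Proof.
move=> none; apply/eqP; rewrite -leqn0; apply/bigmax_leqP => i _.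
by rewrite /witness; case: pselect => // h; case: (none i).
Qed.

End WitnessBound.

Lemma cardsU_disjoint (T : finType) (A B : {set T}) :
  [disjoint A & B] -> #|A :|: B| = (#|A| + #|B|)%N.
Proof. by move=> dAB; rewrite cardsU disjoint_setI0 // cards0 subn0. Qed.

Section Kfactor.
Variables (V : finType) (k : nat) (KE : {set {set 'I_k}}) (H : {set {set V}}).
Local Notation Kfactor := (has_Kfactor KE H).

Lemma has_Kfactor0 : Kfactor set0.
Proof.
apply/existsP; exists set0; rewrite partition_set0 eqxx /=.
by apply/forall_inP => B; rewrite inE.
Qed.

Lemma has_KfactorU (A B : {set V}) :
  [disjoint A & B] -> Kfactor A -> Kfactor B -> Kfactor (A :|: B).
Proof.
move=> dAB /existsP[PA /andP[pA fA]] /existsP[PB /andP[pB fB]].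
apply/existsP; exists (PA :|: PB); apply/andP; split.
  case/and3P: pA => /eqP cA tA nA; case/and3P: pB => /eqP cB tB nB.
  apply/and3P; split.
  - by apply/eqP; rewrite -cA -cB /cover bigcup_setU.
  - by apply: trivIsetU tA tB _; rewrite cA cB.
  - by rewrite inE negb_or nA nB.
by apply/forall_inP => X; rewrite inE => /orP[]; [move/forall_inP: fA | move/forall_inP: fB]; apply.
Qed.

Lemma has_Kfactor_copy (f : {ffun 'I_k -> V}) :
  (0 < k)%N -> embedding KE H f -> Kfactor (f @: setT).
Proof.
move=> k_gt0 ef; apply/existsP; exists [set f @: setT]; apply/andP; split.
  rewrite /partition cover1 eqxx trivIset1 /= inE eq_sym.
  by apply/set0Pn; exists (f (Ordinal k_gt0)); apply: imset_f.
by apply/forall_inP => X; rewrite inE => /eqP ->; apply/existsP; exists f; rewrite ef eqxx.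
Qed.

End Kfactor.

Section IndexVector.
Variables (V : finType) (r : nat) (pt : V -> 'I_r.+1).
Local Open Scope ring_scope.

Lemma sum_card_parts (A : {set V}) :
  (\sum_(j < r) #|A :&: Vpart pt j|)%N = #|A :\: V0 pt|.
Proof.
have card_sub (P : pred V) : #|A :&: [set x | P x]| = (\sum_(x in A) P x)%N.
  rewrite -sum1_card big_mkcond /= [RHS]big_mkcond; apply: eq_bigr => x _.
  by rewrite !inE; case: (x \in A); case: (P x).
rewrite setDE (eq_bigr (fun j => \sum_(x in A) (pt x == lift ord0 j) : nat))%N;
  last by move=> j _; rewrite -card_sub.
rewrite exchange_big /= (_ : ~: V0 pt = [set x | pt x != ord0]); last first.
  by apply/setP => x; rewrite !inE.
rewrite card_sub; apply: eq_bigr => x _.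
case: (unliftP ord0 (pt x)) => [j -> | ->]; last by rewrite eqxx /= big1.
rewrite eq_sym (neq_lift ord0 j) (bigD1 j) //= eqxx big1 //.
by move=> i /negbTE ij; rewrite (inj_eq (@lift_inj _ ord0)) eq_sym ij.
Qed.

Lemma sum_ivec (A : {set V}) : \sum_(j < r) ivec pt A ord0 j = (#|A :\: V0 pt|)%:Z.
Proof.
rewrite -sum_card_parts (big_morph Posz PoszD (erefl _)).
by apply: eq_bigr => j _; rewrite mxE.
Qed.

Lemma ivec0 : ivec pt set0 = 0.
Proof. by apply/rowP => j; rewrite !mxE set0I cards0. Qed.

Lemma ivecU (A B : {set V}) : [disjoint A & B] ->
  ivec pt (A :|: B) = ivec pt A + ivec pt B.
Proof.
move=> dAB; apply/rowP => j; rewrite !mxE setIUl cardsU_disjoint ?PoszD //.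
by apply: disjointW dAB; apply: subsetIl.
Qed.

Lemma ivec1 (x : V) (j : 'I_r) : pt x = lift ord0 j -> ivec pt [set x] = unitv j.
Proof.
move=> ptx; apply/rowP => i; rewrite !mxE eqxx /=.
have [<-|ji] := eqVneq j i; first by rewrite (setIidPl _) ?cards1 // sub1set inE ptx.
rewrite (_ : _ :&: _ = set0) ?cards0 //; apply/setP => y; rewrite !inE.
by apply/negP => /andP[/eqP -> ]; rewrite ptx (inj_eq (@lift_inj _ ord0)) (negbTE ji).
Qed.

Lemma ivecD1 (A : {set V}) x : x \in A -> ivec pt A = ivec pt [set x] + ivec pt (A :\ x).
Proof. by move=> xA; rewrite -ivecU ?setD1K // disjoints1 !inE eqxx. Qed.

Lemma ivec_eq0 (A : {set V}) : A \subset ~: V0 pt -> ivec pt A = 0 -> A = set0.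
Proof.
move=> sA iA0; apply/setP => x; rewrite inE; apply/negP => xA.
have := subsetP sA x xA; rewrite !inE.
case: (unliftP ord0 (pt x)) => [j ptx _ | ->]; last by rewrite eqxx.
have := congr1 (fun M : 'rV[int]_r => M ord0 j) iA0; rewrite !mxE.
case=> /eqP; rewrite cards_eq0 => /eqP/setP/(_ x); rewrite !inE xA /=.
by rewrite ptx eqxx.
Qed.

Lemma ivec_eq_same_part (A B : {set V}) x :
  x \in A -> x \notin V0 pt -> ivec pt A = ivec pt B -> exists2 y, y \in B & pt y = pt x.
Proof.
move=> xA; rewrite inE; case: (unliftP ord0 (pt x)) => [j ptx _|->]; last by rewrite eqxx.
move=> /(congr1 (fun M : 'rV[int]_r => M ord0 j)); rewrite !mxE => -[eAB].
have : (0 < #|B :&: Vpart pt j|)%N.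
  by rewrite -eAB; apply/card_gt0P; exists x; rewrite inE xA /Vpart inE ptx eqxx.
by case/card_gt0P => y; rewrite inE /Vpart inE ptx => /andP[yB /eqP pty]; exists y.
Qed.

Lemma Vpart_of_notin_V0 x : x \in ~: V0 pt -> exists j, x \in Vpart pt j.
Proof.
rewrite !inE; case: (unliftP ord0 (pt x)) => [j ptx _|->]; last by rewrite eqxx.
by exists j; rewrite inE ptx.
Qed.

End IndexVector.

Section CopiesWithIndexVector.
Variables (V : finType) (k r : nat) (KE : {set {set 'I_k}}) (H : {set {set V}})
  (pt : V -> 'I_r.+1).
Local Open Scope ring_scope.

Definition copy_vertices (F : {set {set V}}) : {set V} := \bigcup_(e in F) e.

Definition copies_with (w : 'rV[int]_r) : {set {set {set V}}} :=
  [set F in copies KE H | ivec pt (copy_vertices F) == w].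

Definition copy_vsets (w : 'rV[int]_r) : {set {set V}} :=
  [set copy_vertices F | F in copies_with w].

Lemma copy_verticesP F : F \in copies KE H ->
  exists f : {ffun 'I_k -> V}, [/\ embedding KE H f, copy_vertices F \subset f @: setT &
     #|f @: (setT : {set 'I_k})| = k].
Proof.
rewrite inE => /existsP[f /andP[ef /eqP ->]]; exists f; split => //.
  apply/subsetP => x /bigcupP[e /imsetP[e' _ ->] /imsetP[y _ ->]].
  by apply/imsetP; exists y; rewrite ?inE.
by move: ef => /andP[/injectiveP f_inj _]; rewrite card_imset // cardsT card_ord.
Qed.

(* A vertex set of size at most [k] carries at most [2 ^ (2 ^ k)] edge sets. *)
Lemma card_copies_with w : (#|copies_with w| <= #|copy_vsets w| * 2 ^ (2 ^ k))%N.
Proof.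
apply: leq_card_fibers => c.
have [->|[F0]] := set_0Vmem [set F in copies_with w | copy_vertices F == c].
  by rewrite cards0.
rewrite inE => /andP[]; rewrite inE => /andP[F0c _] /eqP <-.
have [f [_ sF0 cardf]] := copy_verticesP F0c.
have cardF0 : (#|copy_vertices F0| <= k)%N by rewrite -cardf subset_leq_card.
apply: (@leq_trans #|powerset (powerset (copy_vertices F0))|).
  apply: subset_leq_card; apply/subsetP => F; rewrite !inE => /andP[_ /eqP <-].
  by apply/subsetP => e eF; rewrite inE; apply: bigcup_sup.
by rewrite !card_powerset leq_pexp2l // leq_pexp2l.
Qed.

(* Since the coordinates of [w] sum to [k], a copy with index vector [w] has
   all its [k] vertices outside [V_0]. *)
Lemma copy_vsetsP w c : (0 < k)%N -> kvector k w -> c \in copy_vsets w ->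
  [/\ has_Kfactor KE H c, c \subset ~: V0 pt, #|c| = k & ivec pt c = w].
Proof.
move=> k_gt0 [_ sum_w] /imsetP[F]; rewrite inE => /andP[Fc /eqP iF] ->.
have [f [ef sF cardf]] := copy_verticesP Fc.
have le_k : (k <= #|copy_vertices F :\: V0 pt|)%N.
  by have := sum_ivec pt (copy_vertices F); rewrite iF sum_w => -[->].
have le_D : (#|copy_vertices F :\: V0 pt| <= #|copy_vertices F|)%N.
  by apply/subset_leq_card/subsetDl.
have le_F : (#|copy_vertices F| <= k)%N by rewrite -cardf subset_leq_card.
have eF : copy_vertices F = f @: setT.
  by apply/eqP; rewrite eqEcard sF cardf (leq_trans le_k le_D).
have eD : copy_vertices F :\: V0 pt = copy_vertices F.
  by apply/eqP; rewrite eqEcard subsetDl (leq_trans le_F le_k).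
split => //.
- by rewrite eF; apply: has_Kfactor_copy.
- by rewrite -eD setDE subsetIr.
- by apply/eqP; rewrite eqn_leq le_F (leq_trans le_k le_D).
Qed.

End CopiesWithIndexVector.

Section SetAlgebra.
Variables (V : finType) (a : V) (Z W D : {set V}).
Hypothesis dW : [disjoint W & a |: Z].

Lemma setU1U_setD : D \subset a |: Z ->
  (a |: (Z :|: W)) :\: D = ((a |: Z) :\: D) :|: W.
Proof.
move=> sD; apply/setP => x; rewrite !inE.
have [xW|_] := boolP (x \in W); last by rewrite !orbF.
by rewrite !orbT andbT; apply/negP => /(subsetP sD); rewrite (disjointFr dW xW).
Qed.

Lemma setU1U_setDU : (a |: (Z :|: W)) :\: (D :|: W) = (a |: Z) :\: D.
Proof.
apply/setP => x; rewrite !inE.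
have [xW|_] := boolP (x \in W); last by rewrite !orbF.
by rewrite orbT /=; have := disjointFr dW xW; rewrite !inE => ->; rewrite andbF.
Qed.

Lemma setU1U_setDD1 x : x \in D -> D \subset a |: Z ->
  (a |: (Z :|: W)) :\: (D :\ x) = ((a |: Z) :\: D) :|: (x |: W).
Proof.
move=> xD sD; rewrite setDDr setU1U_setD // (setIidPr _) -?setUA 1?[W :|: _]setUC //.
by rewrite sub1set (subsetP (setUS _ (subsetUl Z W))) ?(subsetP sD).
Qed.

Lemma subset_setU1U : D \subset a |: Z -> D \subset a |: (Z :|: W).
Proof. by move=> sD; apply: subset_trans sD _; apply/setUS/subsetUl. Qed.

End SetAlgebra.

Section FactorUpto.
Variables (V : finType) (k r : nat) (KE : {set {set 'I_k}}) (H : {set {set V}})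
  (pt : V -> 'I_r.+1) (u v : V).
Local Notation Kfactor := (has_Kfactor KE H).
Local Open Scope ring_scope.

(* [Z] is being grown into a common absorber of [u] and [v]; [D1] and [D2] are
   the leftovers that [u + Z] and [v + Z] do not yet cover.  As they avoid
   [V_0], [d = 0] and [t = 0] force both to be empty. *)
Definition factor_upto (d : 'rV[int]_r) (t : nat) (Z : {set V}) : Prop :=
  exists D1 D2 : {set V},
    [/\ D1 \subset u |: Z, D2 \subset v |: Z, D1 \subset ~: V0 pt, D2 \subset ~: V0 pt &
        [/\ #|D1| = t, ivec pt D1 - ivec pt D2 = d,
         Kfactor ((u |: Z) :\: D1) & Kfactor ((v |: Z) :\: D2)]].

Lemma disjoint_setU1_pair (W Z : {set V}) : [disjoint W & u |: (v |: Z)] ->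
  [disjoint W & u |: Z] /\ [disjoint W & v |: Z].
Proof.
move=> dW; split; apply: disjointWr dW; apply/subsetP => x; rewrite !inE.
  by case/orP=> ->; rewrite ?orbT.
by move=> ->; rewrite orbT.
Qed.

Lemma factor_upto_start : u \in ~: V0 pt -> v \in ~: V0 pt ->
  factor_upto (ivec pt [set u] - ivec pt [set v]) 1 set0.
Proof.
move=> hu hv; exists [set u], [set v]; rewrite !setU0 !setDv cards1.
by split; rewrite ?subxx ?sub1set //; split=> //; apply: has_Kfactor0.
Qed.

Lemma factor_upto_finish Z : factor_upto 0 0 Z -> Kfactor (u |: Z) /\ Kfactor (v |: Z).
Proof.
move=> [D1 [D2 [_ _ _ sD2 [/eqP cardD1 eD f1 f2]]]].
move: cardD1 eD f1 f2; rewrite cards_eq0 => /eqP -> /eqP; rewrite ivec0 sub0r oppr_eq0.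
by move=> /eqP/(ivec_eq0 sD2) ->; rewrite !setD0.
Qed.

(* The copy covers itself on one side and joins the leftover of the other. *)
Lemma factor_upto_copy d t (Z W : {set V}) (on_v : bool) :
  factor_upto d t Z -> [disjoint W & u |: (v |: Z)] -> Kfactor W ->
  W \subset ~: V0 pt -> #|W| = k ->
  factor_upto (if on_v then d - ivec pt W else d + ivec pt W)
      (if on_v then t else t + k) (Z :|: W).
Proof.
move=> [D1 [D2 [s1 s2 s1' s2' [c1 e f1 f2]]]] dW fW sW cW.
have [dWu dWv] := disjoint_setU1_pair dW.
have sWU a : W \subset a |: (Z :|: W) by apply: subset_trans (subsetUr Z W) (subsetUr _ _).
have dDW (D : {set V}) a : D \subset a |: Z -> [disjoint W & a |: Z] -> [disjoint D & W].
  by move=> sD daW; rewrite disjoint_sym; apply: disjointWr daW.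
have fU (D : {set V}) a : D \subset a |: Z -> [disjoint W & a |: Z] ->
    Kfactor ((a |: Z) :\: D) -> Kfactor ((a |: (Z :|: W)) :\: D).
  move=> sD daW fD; rewrite setU1U_setD //; apply: has_KfactorU => //.
  by rewrite disjoint_sym; apply: disjointWr daW; apply: subsetDl.
case: on_v.
- exists D1, (D2 :|: W); split; rewrite ?subUset ?sWU ?subset_setU1U ?s1' ?s2' ?sW //.
  split=> //; last by rewrite setU1U_setDU.
  + by rewrite ivecU ?(dDW _ v) // opprD addrA e.
  + exact: fU.
- exists (D1 :|: W), D2; split; rewrite ?subUset ?sWU ?subset_setU1U ?s1' ?s2' ?sW //.
  split=> //; first by rewrite cardsU_disjoint ?(dDW _ u) // c1 cW.
  + by rewrite ivecU ?(dDW _ u) // addrAC e.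
  + by rewrite setU1U_setDU.
  + exact: fU.
Qed.

(* [x] leaves [D1], [y] leaves [D2], and [W] is covered together with either. *)
Lemma factor_upto_pair t Z : factor_upto 0 t.+1 Z ->
  exists (j : 'I_r) (x y : V), [/\ x \in Vpart pt j, y \in Vpart pt j &
    forall W : {set V}, [disjoint W & u |: (v |: Z)] ->
      Kfactor (x |: W) -> Kfactor (y |: W) -> factor_upto 0 t (Z :|: W)].
Proof.
move=> [D1 [D2 [s1 s2 s1' s2' [c1 e f1 f2]]]].
have [x xD1] : exists x, x \in D1 by apply/card_gt0P; rewrite c1.
have xV0 : x \notin V0 pt by have := subsetP s1' x xD1; rewrite inE.
have e12 : ivec pt D1 = ivec pt D2 by apply/eqP; rewrite -subr_eq0 e.
have [y yD2 ptyx] := ivec_eq_same_part xD1 xV0 e12.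
move: xV0; rewrite inE; case: (unliftP ord0 (pt x)) => [j ptx _|->]; last by rewrite eqxx.
exists j, x, y; split; rewrite ?inE ?ptyx ?ptx // => W dW fx fy.
have [dWu dWv] := disjoint_setU1_pair dW.
have fD (a z : V) (D : {set V}) : z \in D -> D \subset a |: Z -> [disjoint W & a |: Z] ->
    Kfactor ((a |: Z) :\: D) -> Kfactor (z |: W) -> Kfactor ((a |: (Z :|: W)) :\: (D :\ z)).
  move=> zD sD daW fD fz; rewrite setU1U_setDD1 //; apply: has_KfactorU => //.
  rewrite -setI_eq0 setIUr setU_eq0 !setI_eq0 disjoint_sym disjoints1 !inE zD /=.
  by rewrite disjoint_sym; apply: disjointWr daW; apply: subsetDl.
have sD1 (D E : {set V}) z : D \subset E -> D :\ z \subset E.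
  by move=> sDE; apply: subset_trans sDE; apply: subsetDl.
exists (D1 :\ x), (D2 :\ y); split; rewrite ?subset_setU1U ?sD1 //.
split; rewrite ?fD //.
- by move: c1; rewrite (cardsD1 x D1) xD1 => -[].
- move: e12; rewrite (ivecD1 pt xD1) (ivecD1 pt yD2) (ivec1 ptx) (ivec1 (etrans ptyx ptx)).
  by move/addrI ->; rewrite subrr.
Qed.

Definition states d t s : {set {set V}} :=
  [set Z : {set V} | (#|Z| == s) && `[< factor_upto d t Z >]].

Definition extensions d t b (Z : {set V}) : {set {set V}} :=
  [set W : {set V} | [&& #|W| == b, [disjoint W & u |: (v |: Z)] &
                        `[< factor_upto d t (Z :|: W) >]]].

Lemma sum_card_extensions d t s d' t' b :
  (\sum_(Z in states d t s) #|extensions d' t' b Z| <=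
     #|states d' t' (s + b)| * 2 ^ (s + b))%N.
Proof.
apply: count_pairs_by_union => Z; rewrite inE => /andP[/eqP cZ _] W.
rewrite inE => /and3P[/eqP cW dW fZW].
have dZW : [disjoint Z & W].
  rewrite disjoint_sym; apply: disjointWr dW; apply/subsetP => x xZ.
  by rewrite !inE xZ !orbT.
by rewrite inE cardsU_disjoint // cZ cW eqxx fZW.
Qed.

End FactorUpto.

Lemma leq_card_setU11 (V : finType) (x y : V) (Z : {set V}) :
  (#|x |: (y |: Z)| <= #|Z| + 2)%N.
Proof.
rewrite !cardsU1; have := leq_b1 (x \notin y |: Z); have := leq_b1 (y \notin Z).
lia.
Qed.

Local Open Scope ring_scope.

Lemma many_draws_avoid (R : realType) (V : finType) (G B : {set {set V}})
    (X : {set V}) b (g : R) :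
  (forall W, W \in G -> #|W| = b.+1) ->
  [set W in G | [disjoint W & X]] \subset B ->
  g * #|V|%:R ^+ b.+1 <= #|G|%:R -> (2 * #|X|)%:R <= g * #|V|%:R ->
  g / 2 * #|V|%:R ^+ b.+1 <= #|B|%:R.
Proof.
move=> cardG sB leG leX.
have leGB : (#|G| <= #|B| + #|X| * #|V| ^ b)%N.
  apply: leq_trans (leq_add (subset_leq_card sB) (card_draws_meeting X b)).
  apply: leq_trans (leq_card_setU _ _); apply: subset_leq_card.
  apply/subsetP => W WG; rewrite !inE WG cardG // eqxx /=.
  by case: [disjoint W & X].
have : #|G|%:R <= #|B|%:R + #|X|%:R * #|V|%:R ^+ b :> R.
  by rewrite -natrX -natrM -natrD ler_nat.
have : 0 <= #|V|%:R ^+ b :> R by rewrite exprn_ge0 ?ler0n.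
move: leX leG; rewrite exprS natrM.
set N := #|V|%:R ^+ b; set x := #|X|%:R; set m := #|V|%:R => leX leG N_ge0.
have : 0 <= N * (g * m - 2%:R * x) by rewrite mulr_ge0 // subr_ge0.
nra.
Qed.

Lemma large_of_truncn (R : realType) (g : R) a m : 0 < g ->
  (a * (Num.truncn g^-1).+1 <= m)%N -> a%:R <= g * m%:R.
Proof.
move=> g_gt0 le_m.
apply: le_trans (_ : g * (a * (Num.truncn g^-1).+1)%:R <= _); last by rewrite ler_pM2l // ler_nat.
rewrite natrM mulrCA -[X in X <= _]mulr1 ler_wpM2l //.
apply: le_trans (_ : g * g^-1 <= _); first by rewrite mulfV ?lt0r_neq0.
by rewrite ler_pM2l //; apply/ltW/truncnS_gt.
Qed.

Section Growth.
Variables (R : realType) (V : finType) (k r : nat) (KE : {set {set 'I_k}})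
  (H : {set {set V}}) (pt : V -> 'I_r.+1) (u v : V).
Local Notation n := (#|V|%:R : R).
Local Notation states := (states KE H pt u v).
Local Notation extensions := (extensions KE H pt u v).

Lemma card_states_step d t s d' t' b (c g : R) S :
  0 <= c -> 0 <= g -> (s + b <= S)%N ->
  (forall Z, Z \in states d t s -> g / 2 * n ^+ b <= #|extensions d' t' b Z|%:R) ->
  c * n ^+ s <= #|states d t s|%:R ->
  c * (g / 2 / 2 ^+ S) * n ^+ (s + b)%N <= #|states d' t' (s + b)%N|%:R.
Proof.
move=> c_ge0 g_ge0 le_S ext_ge states_ge.
have ge0 m : 0 <= n ^+ m by rewrite exprn_ge0 ?ler0n.
have pow2_gt0 : (0 : R) < 2 ^+ S by rewrite exprn_gt0 ?ltr0n.
have sum_ge : #|states d t s|%:R * (g / 2 * n ^+ b) <=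
    (\sum_(Z in states d t s) #|extensions d' t' b Z|)%:R.
  by rewrite natr_sum mulr_natl -sumr_const; apply: ler_sum.
have sum_le : (\sum_(Z in states d t s) #|extensions d' t' b Z|)%:R <=
    #|states d' t' (s + b)|%:R * 2 ^+ S :> R.
  rewrite -natrX -natrM ler_nat; apply: leq_trans (sum_card_extensions KE H pt u v d t s d' t' b) _.
  by rewrite leq_mul2l leq_pexp2l ?le_S ?orbT.
have -> : c * (g / 2 / 2 ^+ S) * n ^+ (s + b) =
    c * n ^+ s * (g / 2 * n ^+ b) / 2 ^+ S by rewrite exprD; ring.
rewrite ler_pdivrMr //; apply: le_trans (le_trans sum_ge sum_le).
by rewrite ler_wpM2r // mulr_ge0 ?divr_ge0.
Qed.

Lemma card_copy_vsets (mu : R) w : robust KE H pt mu w ->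
  mu / 2 ^+ (2 ^ k) * n ^+ k <= #|copy_vsets KE H pt w|%:R.
Proof.
move=> [_ copies_ge]; rewrite mulrAC ler_pdivrMr ?exprn_gt0 ?ltr0n //.
apply: le_trans copies_ge _; rewrite -natrX -natrM ler_nat.
exact: card_copies_with.
Qed.

Lemma card_copy_extensions (on_v : bool) (mu g : R) w d t s Z :
  (0 < k)%N -> robust KE H pt mu w -> Z \in states d t s ->
  g <= mu / 2 ^+ (2 ^ k) -> (2 * (s + 2))%:R <= g * n ->
  g / 2 * n ^+ k <=
  #|extensions (if on_v then d - w else d + w) (if on_v then t else t + k) k Z|%:R.
Proof.
move=> k_gt0 rw; rewrite inE => /andP[/eqP cZ /asboolP fZ] g_le le_n.
have [kw _] := rw.
have -> : n ^+ k = n ^+ k.-1.+1 by rewrite prednK.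
apply: (@many_draws_avoid R V (copy_vsets KE H pt w) _ (u |: (v |: Z))).
- by move=> W /(copy_vsetsP k_gt0 kw)[_ _ -> _]; rewrite prednK.
- apply/subsetP => W; rewrite inE => /andP[WG dW].
  have [fW sW cW iW] := copy_vsetsP k_gt0 kw WG.
  rewrite inE cW eqxx dW /=; apply/asboolP.
  by rewrite -iW; apply: factor_upto_copy.
- rewrite prednK //; apply: le_trans (card_copy_vsets rw).
  by rewrite ler_wpM2r ?exprn_ge0 ?ler0n.
- by apply: le_trans le_n; rewrite ler_nat leq_mul2l -cZ leq_card_setU11.
Qed.

Lemma card_pair_extensions (beta g : R) i0 t s Z :
  (forall j, closed_set KE H beta i0 (Vpart pt j)) -> Z \in states 0 t.+1 s ->
  g <= beta -> (2 * (s + 2))%:R <= g * n -> (1 < i0 * k)%N ->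
  g / 2 * n ^+ (i0 * k)%N.-1 <= #|extensions 0 t (i0 * k)%N.-1 Z|%:R.
Proof.
move=> closed; rewrite inE => /andP[/eqP cZ /asboolP fZ] g_le le_n ik_gt1.
have [j [x [y [xj yj absorb]]]] := factor_upto_pair fZ.
have ik1_gt0 : (0 < (i0 * k).-1)%N by rewrite -ltnS prednK // ltnW.
rewrite -[in n ^+ _](prednK ik1_gt0).
apply: (@many_draws_avoid R V [set W : {set V} | (#|W| == (i0 * k).-1)%N
        && has_Kfactor KE H (x |: W) && has_Kfactor KE H (y |: W)] _ (u |: (v |: Z))).
- by move=> W; rewrite inE => /andP[/andP[/eqP -> _] _]; rewrite (prednK ik1_gt0).
- apply/subsetP => W; rewrite !inE => /andP[/andP[/andP[/eqP cW fx] fy] dW].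
  by rewrite cW eqxx dW /=; apply/asboolP; apply: absorb.
- rewrite (prednK ik1_gt0); apply: le_trans (closed j x y xj yj).
  by rewrite ler_wpM2r ?exprn_ge0 ?ler0n.
- by apply: le_trans le_n; rewrite ler_nat leq_mul2l -cZ leq_card_setU11.
Qed.

End Growth.

Section Chains.
Variables (R : realType) (V : finType) (k r : nat) (KE : {set {set 'I_k}})
  (H : {set {set V}}) (pt : V -> 'I_r.+1) (u v : V) (g : R) (S : nat).
Hypothesis g_ge0 : 0 <= g.
Hypothesis n_large : (2 * (S + 2))%:R <= g * #|V|%:R.
Local Notation n := (#|V|%:R : R).
Local Notation states := (states KE H pt u v).
Local Notation delta := (g / 2 / 2 ^+ S).

Let n_large_le s : (s <= S)%N -> (2 * (s + 2))%:R <= g * n.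
Proof. by move=> le_s; apply: le_trans n_large; rewrite ler_nat leq_mul2l leq_add2r le_s. Qed.

Let delta_ge0 : 0 <= delta.
Proof. by rewrite !divr_ge0 // exprn_ge0. Qed.

Lemma card_states_copies (on_v : bool) (L : seq 'rV[int]_r) (mu : R) d t s (c : R) :
  (0 < k)%N -> {in L, forall w, robust KE H pt mu w} -> g <= mu / 2 ^+ (2 ^ k) ->
  0 <= c -> (s + k * size L <= S)%N ->
  c * n ^+ s <= #|states d t s|%:R ->
  c * delta ^+ (size L) * n ^+ (s + k * size L)%N <=
  #|states (if on_v then d - \sum_(w <- L) w else d + \sum_(w <- L) w)
        (if on_v then t else t + k * size L)%N (s + k * size L)%N|%:R.
Proof.
move=> k_gt0; elim: L d t s c => [|w L IH] d t s c robL g_le c_ge0 le_S states_ge.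
  by rewrite /= big_nil subr0 addr0 muln0 !addn0 expr0 mulr1; case: on_v.
have le_S1 : (s + k <= S)%N by apply: leq_trans le_S; rewrite leq_add2l /= mulnS leq_addr.
have step := card_states_step (d' := if on_v then d - w else d + w)
  (t' := (if on_v then t else t + k)%N) c_ge0 g_ge0 le_S1 (fun Z HZ => card_copy_extensions on_v k_gt0 (robL w (mem_head _ _))
    HZ g_le (n_large_le (leq_trans (leq_addr _ _) le_S1))) states_ge.
have := IH _ _ _ _ (fun x xL => robL x (@mem_behead _ (w :: L) x xL)) g_le (mulr_ge0 c_ge0 delta_ge0)
  _ step; rewrite -addnA -mulnS => /(_ le_S).
clear IH step; rewrite /= big_cons exprS mulrA; case: on_v.
- by rewrite opprD addrA.
- by rewrite addrA -addnA -mulnS.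
Qed.

Lemma card_states_pairs (beta : R) i0 t s (c : R) :
  (forall j, closed_set KE H beta i0 (Vpart pt j)) -> g <= beta -> (1 < i0 * k)%N ->
  0 <= c -> (s + t * (i0 * k).-1 <= S)%N ->
  c * n ^+ s <= #|states 0 t s|%:R ->
  c * delta ^+ t * n ^+ (s + t * (i0 * k).-1)%N <=
  #|states 0 0 (s + t * (i0 * k).-1)%N|%:R.
Proof.
move=> closed g_le ik_gt1; elim: t s c => [|t IH] s c c_ge0 le_S states_ge.
  by rewrite expr0 mulr1 mul0n addn0.
have le_S1 : (s + (i0 * k).-1 <= S)%N.
  by apply: leq_trans le_S; rewrite leq_add2l mulSn leq_addr.
have step := card_states_step (t' := t) c_ge0 g_ge0 le_S1 (fun Z HZ => card_pair_extensions closed HZ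
  g_le (n_large_le (leq_trans (leq_addr _ _) le_S1)) ik_gt1) states_ge.
have := IH _ _ (mulr_ge0 c_ge0 delta_ge0) _ step.
by rewrite -addnA -mulSn exprS mulrA; apply.
Qed.

End Chains.

Section CoordSum.
Variable r : nat.

Definition coord_sum (w : 'rV[int]_r) : int := \sum_(j < r) w ord0 j.

Lemma coord_sumD a b : coord_sum (a + b) = coord_sum a + coord_sum b.
Proof. by rewrite /coord_sum -big_split; apply: eq_bigr => j _; rewrite mxE. Qed.

Lemma coord_sumN a : coord_sum (- a) = - coord_sum a.
Proof. by rewrite /coord_sum -sumrN; apply: eq_bigr => j _; rewrite mxE. Qed.

Lemma coord_sum0 : coord_sum 0 = 0.
Proof. by rewrite /coord_sum big1 // => j _; rewrite mxE. Qed.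

Lemma coord_sum_big (L : seq 'rV[int]_r) :
  coord_sum (\sum_(w <- L) w) = \sum_(w <- L) coord_sum w.
Proof. exact: (big_morph coord_sum coord_sumD coord_sum0). Qed.

Lemma coord_sum_unitv j : coord_sum (unitv j) = 1.
Proof.
rewrite /coord_sum (bigD1 j) //= big1 ?addr0; first by rewrite mxE !eqxx.
by move=> i ij; rewrite mxE (negbTE ij) andbF.
Qed.

Lemma size_eq_kvectors k (P N : seq 'rV[int]_r) : (0 < k)%N ->
  {in P, forall w, kvector k w} -> {in N, forall w, kvector k w} ->
  coord_sum (\sum_(w <- P) w - \sum_(w <- N) w) = 0 -> size P = size N.
Proof.
move=> k_gt0 kP kN; rewrite coord_sumD coord_sumN !coord_sum_big.
have sum_k (L : seq 'rV[int]_r) : {in L, forall w, kvector k w} ->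
    \sum_(w <- L) coord_sum w = (k * size L)%N%:Z.
  elim: L => [|a L IH] kL; first by rewrite big_nil muln0.
  rewrite big_cons IH => [|x xL]; last by apply: kL; rewrite inE xL orbT.
  by have [_ sum_a] := kL a (mem_head _ _); rewrite /coord_sum sum_a mulnS PoszD.
rewrite (sum_k _ kP) (sum_k _ kN) => /eqP; rewrite subr_eq0 eqz_nat eqn_pmul2l //.
by move/eqP.
Qed.

Lemma combination_as_difference (A : 'rV[int]_r -> Prop) (cs : seq ('rV[int]_r * int)) :
  {in cs, forall p, A p.1} ->
  exists P N : seq 'rV[int]_r, [/\ {in P, forall w, A w}, {in N, forall w, A w} &
    \sum_(p <- cs) p.1 *~ p.2 = \sum_(w <- P) w - \sum_(w <- N) w].
Proof.
have sum_nseq (w : 'rV[int]_r) m : \sum_(x <- nseq m w) x = w *+ m.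
  by elim: m => [|m IH]; rewrite ?big_nil ?mulr0n //= big_cons IH mulrS.
elim: cs => [|[w c] cs IH] Acs; first by exists [::], [::]; rewrite !big_nil subr0.
have [|P [N [AP AN e]]] := IH; first by move=> p pcs; apply: Acs; rewrite inE pcs orbT.
have Aw : A w by apply: (Acs (w, c)); rewrite inE eqxx.
case: c {Acs IH} => m.
- exists (nseq m w ++ P), N; split => //.
    by move=> x; rewrite mem_cat => /orP[/nseqP[-> _]|/AP].
  by rewrite big_cons e big_cat sum_nseq /= addrA.
- exists P, (nseq m.+1 w ++ N); split => //.
    by move=> x; rewrite mem_cat => /orP[/nseqP[-> _]|/AN].
  by rewrite big_cons e big_cat sum_nseq /= NegzE mulrNz opprD addrCA.
Qed.

End CoordSum.

Section UniformRepresentation.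
Variables (k r : nat).
Local Notation kfun := {ffun 'I_r -> 'I_k.+1}.

Definition kvec_of_ffun (f : kfun) : 'rV[int]_r := \row_j (f j : nat)%:Z.

Definition ffun_of_kvec (w : 'rV[int]_r) : kfun := [ffun j => inord `|w ord0 j|%N].

Lemma ffun_of_kvecK w : kvector k w -> kvec_of_ffun (ffun_of_kvec w) = w.
Proof.
move=> [w_ge0 sum_w]; apply/rowP => j; rewrite !mxE ffunE.
have wj_le : w ord0 j <= k%:Z.
  by rewrite -sum_w (bigD1 j) //= lerDl; apply: sumr_ge0 => i _; apply: w_ge0.
have wj_le' : (`|w ord0 j| <= k)%N by rewrite -lez_nat gez0_abs ?w_ge0.
by rewrite inordK ?ltnS // gez0_abs.
Qed.

Definition diff_rep (T : {set kfun}) (x : 'rV[int]_r) (m : nat) : Prop :=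
  exists P N : seq kfun, [/\ size P = m, size N = m, {subset P <= T}, {subset N <= T} &
    \sum_(f <- P) kvec_of_ffun f - \sum_(f <- N) kvec_of_ffun f = x].

(* The robust k-vectors of any [H] are encoded by one of the finitely many sets
   [T], so the length of a shortest representation is bounded independently
   of [H]. *)
Definition unit_diff_rep (i : {set kfun} * 'I_r * 'I_r) (m : nat) : Prop :=
  let: (T, j, l) := i in (j < l)%N /\ diff_rep T (unitv j - unitv l) m.

Definition rep_bound : nat := witness_bound unit_diff_rep.

Variables (R : realType) (V : finType) (KE : {set {set 'I_k}}) (H : {set {set V}})
  (pt : V -> 'I_r.+1) (mu : R).
Local Notation robust := (robust KE H pt mu).
Hypothesis k_gt0 : (0 < k)%N.
Hypothesis unit_diff_lattice :
  forall j l : 'I_r, (j < l)%N -> in_lattice KE H pt mu (unitv j - unitv l).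

Lemma unit_diff_neq0 (j l : 'I_r) : (j < l)%N -> unitv j - unitv l != 0.
Proof.
move=> jl; apply/eqP => /(congr1 (fun M : 'rV[int]_r => M ord0 j)).
by rewrite !mxE !eqxx -(inj_eq val_inj) (ltn_eqF jl).
Qed.

Lemma coord_sum_unit_diff (j l : 'I_r) : coord_sum (unitv j - unitv l) = 0.
Proof. by rewrite coord_sumD coord_sumN !coord_sum_unitv subrr. Qed.

Lemma short_unit_diff_rep (j l : 'I_r) : (j < l)%N ->
  exists P N : seq 'rV[int]_r,
    [/\ {in P, forall w, robust w}, {in N, forall w, robust w},
        size P = size N, (size P <= rep_bound)%N &
        \sum_(w <- P) w - \sum_(w <- N) w = unitv j - unitv l].
Proof.
move=> jl; have [cs [robust_cs ecs]] := unit_diff_lattice jl.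
have [P0 [N0 [rP0 rN0 ePN0]]] := combination_as_difference robust_cs.
have kvec_of (L : seq 'rV[int]_r) : {in L, forall w, robust w} -> {in L, forall w, kvector k w}.
  by move=> rL w /rL[].
pose T := [set f : kfun | `[< robust (kvec_of_ffun f) >]].
have encodeT (L : seq 'rV[int]_r) : {in L, forall w, robust w} ->
    {subset map ffun_of_kvec L <= T}.
  move=> rL f /mapP[w /rL rw ->]; rewrite inE; apply/asboolP.
  by rewrite ffun_of_kvecK //; case: rw.
have encode_sum (L : seq 'rV[int]_r) : {in L, forall w, robust w} ->
    \sum_(f <- map ffun_of_kvec L) kvec_of_ffun f = \sum_(w <- L) w.
  by move=> rL; rewrite big_map; apply: eq_big_seq => w /rL[kw _]; rewrite ffun_of_kvecK.
have sPN : size P0 = size N0.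
  apply: size_eq_kvectors k_gt0 (kvec_of _ rP0) (kvec_of _ rN0) _.
  by rewrite -ePN0 -ecs coord_sum_unit_diff.
have [|m le_m [_ [P [N [sP sN TP TN ePN]]]]] := @witness_boundP _ unit_diff_rep (T, j, l).
  exists (size P0); split => //; exists (map ffun_of_kvec P0), (map ffun_of_kvec N0).
  split; rewrite ?size_map ?sPN //; try exact: encodeT.
  by rewrite !encode_sum // ecs ePN0.
have decode (L : seq kfun) : {subset L <= T} ->
    {in map kvec_of_ffun L, forall w, robust w}.
  by move=> TL w /mapP[f /TL]; rewrite inE => /asboolP rf ->.
exists (map kvec_of_ffun P), (map kvec_of_ffun N).
split; rewrite ?size_map ?sP ?sN //; try exact: decode.
by rewrite !big_map.
Qed.

Lemma robust_exists : (0 < rep_bound)%N -> exists w, robust w.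
Proof.
move=> bound_gt0.
have [[j [l jl]]|no_pair] := pselect (exists j l : 'I_r, (j < l)%N); last first.
  move: bound_gt0; rewrite /rep_bound witness_bound0 // => -[[T j] l] [m [jl _]].
  by apply: no_pair; exists j, l.
have [P [N [rP _ sPN _ ePN]]] := short_unit_diff_rep jl.
case: P rP sPN ePN => [|w P] rP sPN ePN; last by exists w; apply: rP; rewrite mem_head.
case: N sPN ePN => // _ ePN; move: (unit_diff_neq0 jl).
by rewrite -ePN !big_nil subr0 eqxx.
Qed.

Lemma pad_diff_rep (P N : seq 'rV[int]_r) x :
  {in P, forall w, robust w} -> {in N, forall w, robust w} ->
  size P = size N -> (size P <= rep_bound)%N -> \sum_(w <- P) w - \sum_(w <- N) w = x ->
  exists P' N' : seq 'rV[int]_r,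
    [/\ {in P', forall w, robust w}, {in N', forall w, robust w},
        size P' = rep_bound, size N' = rep_bound & \sum_(w <- P') w - \sum_(w <- N') w = x].
Proof.
move=> rP rN sPN le_bound ePN.
have [lt_bound|] := ltnP (size P) rep_bound; last first.
  by move=> ge_bound; exists P, N; split; rewrite -?sPN //; apply/eqP; rewrite eqn_leq le_bound.
have [w0 rw0] := robust_exists (leq_ltn_trans (leq0n _) lt_bound).
pose pad := nseq (rep_bound - size P) w0.
have rpad (L : seq 'rV[int]_r) : {in L, forall w, robust w} -> {in L ++ pad, forall w, robust w}.
  by move=> rL w; rewrite mem_cat => /orP[/rL|/nseqP[-> _]].
exists (P ++ pad), (N ++ pad); split.
- exact: rpad.
- exact: rpad.
- by rewrite size_cat size_nseq subnKC // ltnW.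
- by rewrite size_cat size_nseq -sPN subnKC // ltnW.
- by rewrite !big_cat /= opprD addrACA subrr addr0.
Qed.

Lemma unit_diff_rep_exact (j l : 'I_r) : exists P N : seq 'rV[int]_r,
  [/\ {in P, forall w, robust w}, {in N, forall w, robust w},
      size P = rep_bound, size N = rep_bound &
      \sum_(w <- P) w - \sum_(w <- N) w = unitv j - unitv l].
Proof.
case: (ltngtP j l) => [jl|lj|/val_inj ->].
- have [P [N [rP rN sPN le_bound ePN]]] := short_unit_diff_rep jl.
  exact: pad_diff_rep rP rN sPN le_bound ePN.
- have [P [N [rP rN sPN le_bound ePN]]] := short_unit_diff_rep lj.
  apply: (pad_diff_rep rN rP (esym sPN)); first by rewrite -sPN.
  by rewrite -opprB ePN opprB.
- by apply: (@pad_diff_rep [::] [::]); rewrite ?big_nil ?subrr.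
Qed.

End UniformRepresentation.

Section CommonAbsorbers.
Variables (R : realType) (V : finType) (k r : nat) (KE : {set {set 'I_k}})
  (H : {set {set V}}) (pt : V -> 'I_r.+1).
Local Notation n := (#|V|%:R : R).
Local Notation states := (states KE H pt).

(* [k M] vertices for the copies on each side, then [i0 k - 1] vertices for
   each of the [1 + k M] pairs removed from the leftovers. *)
Definition absorber_size (M i0 : nat) : nat := (2 * (k * M) + (1 + k * M) * (i0 * k).-1)%N.

Lemma card_common_absorbers (beta mu g : R) i0 M (P N : seq 'rV[int]_r) (j l : 'I_r) (u v : V) :
  (0 < k)%N -> (1 < i0 * k)%N -> 0 <= g -> g <= beta -> g <= mu / 2 ^+ (2 ^ k) ->
  (2 * (absorber_size M i0 + 2))%:R <= g * n ->
  (forall j, closed_set KE H beta i0 (Vpart pt j)) ->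
  {in P, forall w, robust KE H pt mu w} -> {in N, forall w, robust KE H pt mu w} ->
  size P = M -> size N = M ->
  \sum_(w <- P) w - \sum_(w <- N) w = unitv j - unitv l ->
  u \in Vpart pt j -> v \in Vpart pt l ->
  (g / 2 / 2 ^+ absorber_size M i0) ^+ (2 * M + (1 + k * M)) * n ^+ absorber_size M i0 <=
  #|[set W : {set V} | (#|W| == absorber_size M i0)%N && has_Kfactor KE H (u |: W)
        && has_Kfactor KE H (v |: W)]|%:R.
Proof.
move=> k_gt0 ik_gt1 g_ge0 g_le_beta g_le_mu n_large closed rP rN sP sN ePN uj vl.
set S := absorber_size M i0; set delta := g / 2 / 2 ^+ S.
have delta_ge0 : 0 <= delta by rewrite !divr_ge0 // exprn_ge0.
have ptu : pt u = lift ord0 j by apply/eqP; move: uj; rewrite inE.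
have ptv : pt v = lift ord0 l by apply/eqP; move: vl; rewrite inE.
have V0_lift x i : pt x = lift ord0 i -> x \in ~: V0 pt.
  by rewrite !inE => ->; rewrite eq_sym neq_lift.
set d0 := ivec pt [set u] - ivec pt [set v].
have start : 1 * n ^+ 0 <= #|states u v d0 1 0|%:R.
  rewrite mul1r expr0 ler1n; apply/card_gt0P; exists set0.
  rewrite inE cards0 eqxx /=; apply/asboolP.
  exact: factor_upto_start (V0_lift _ _ ptu) (V0_lift _ _ ptv).
have leS_N : (0 + k * size N <= S)%N by rewrite add0n sN /S /absorber_size mul2n -addnn -addnA leq_addr.
have := card_states_copies g_ge0 n_large false k_gt0 rN g_le_mu ler01 leS_N start.
rewrite /= sN add0n mul1r => copies_N.
have leS_P : (k * M + k * size P <= S)%N by rewrite sP /S /absorber_size mul2n -addnn leq_addr.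
have := card_states_copies g_ge0 n_large true k_gt0 rP g_le_mu (exprn_ge0 _ delta_ge0) leS_P copies_N.
have -> : d0 + \sum_(w <- N) w - \sum_(w <- P) w = 0.
  by rewrite /d0 (ivec1 ptu) (ivec1 ptv) -ePN subrK subrr.
rewrite /= sP => copies_P.
have eS : (k * M + k * M + (1 + k * M) * (i0 * k).-1)%N = S by rewrite /S /absorber_size mul2n -addnn.
have := card_states_pairs g_ge0 n_large closed g_le_beta ik_gt1
  (mulr_ge0 (exprn_ge0 _ delta_ge0) (exprn_ge0 _ delta_ge0)) _ copies_P.
rewrite eS -!exprD mul2n -addnn => /(_ (leqnn _)) absorbers.
apply: le_trans absorbers _; rewrite ler_nat; apply: subset_leq_card; apply/subsetP => W.
by rewrite !inE => /andP[-> /asboolP/factor_upto_finish[-> ->]].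
Qed.

End CommonAbsorbers.

Lemma absorber_sizeE k M i0 : (0 < i0 * k)%N ->
  absorber_size k M i0 = ((M * i0 * k + i0 + M) * k)%N.-1.
Proof. rewrite /absorber_size; nia. Qed.

Unset Implicit Arguments.
Theorem lemma3p9 (R : realType) (k : nat) (KE : {set {set 'I_k}}) :
  (3 <= k)%N -> complete3partite KE ->
  forall (eps beta mu' : R) (i0 r : nat),
  0 < eps -> 0 < beta -> 0 < mu' -> (0 < i0)%N -> (0 < r)%N ->
  exists beta' : R, 0 < beta' /\
  exists i0' : nat, (0 < i0')%N /\
  exists n0 : nat,
  forall (V : finType) (H : {set {set V}}) (pt : V -> 'I_r.+1),
    uniform3 H -> (n0 <= #|V|)%N ->
    (forall j : 'I_r,
       eps ^+ 2 * #|V|%:R / 2 <= #|Vpart pt j|%:R /\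
       closed_set KE H beta i0 (Vpart pt j)) ->
    (forall j l : 'I_r, (j < l)%N -> in_lattice KE H pt mu' (unitv j - unitv l)) ->
    closed_set KE H beta' i0' (~: V0 pt).
Proof.
move=> k_ge3 _ eps beta mu' i0 r _ beta_gt0 mu_gt0 i0_gt0 _.
have k_gt0 : (0 < k)%N by apply: leq_trans k_ge3.
have ik_gt1 : (1 < i0 * k)%N by apply: leq_trans (leq_pmull _ i0_gt0); apply: leq_trans k_ge3.
pose M := rep_bound k r; pose S := absorber_size k M i0.
pose g := Num.min beta (mu' / 2 ^+ (2 ^ k)).
have g_gt0 : 0 < g by rewrite lt_min beta_gt0 divr_gt0 // exprn_gt0.
exists ((g / 2 / 2 ^+ S) ^+ (2 * M + (1 + k * M))).
split; first by rewrite exprn_gt0 // !divr_gt0 // exprn_gt0.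
exists (M * i0 * k + i0 + M)%N; split; first by rewrite !addn_gt0 i0_gt0 orbT.
exists (2 * (S + 2) * (Num.truncn g^-1).+1)%N => V H pt _ n_ge parts lattice u v /Vpart_of_notin_V0[j uj] /Vpart_of_notin_V0[l vl].
have [P [N [rP rN sP sN ePN]]] := unit_diff_rep_exact k_gt0 lattice j l.
rewrite /reachable -absorber_sizeE ?(ltnW ik_gt1) //.
apply: (card_common_absorbers (beta := beta)) k_gt0 ik_gt1 (ltW g_gt0) _ _ _ _ rP rN sP sN ePN uj vl.
- by rewrite /g ge_min lexx.
- by rewrite /g ge_min lexx orbT.
- exact: large_of_truncn n_ge.
- by move=> i; case: (parts i).
Qed.
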